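(* Let $(G,r)$ be a symmetric group, $r(a,b)=({}^ab,a^b)$, and let $\Gamma=\{a\in G:\ {}^au=u\ \forall u\in G\}$. Then $\Gamma$ equals $\{a\in G: u^a=u\ \forall u\in G\}$, it is an abelian normal subgroup of $G$ invariant under the left and right actions of $G$ on itself, and, with $\widetilde{G}=G/\Gamma$ carrying the quotient symmetric group structure $r_{\widetilde G}(a\Gamma,b\Gamma)=({}^ab\,\Gamma,a^b\,\Gamma)$, the map $\varphi:\widetilde{G}\to[G]$, $a\Gamma\mapsto[a]$, is a well-defined isomorphism of symmetric sets from $(\widetilde{G},r_{\widetilde G})$ onto the retraction $\mathrm{Ret}(G,r)=([G],r_{[G]})$. In particular $[G]$ with multiplication $[a][b]=[ab]$ is a symmetric group and $\varphi$ is an isomorphism of symmetric groups.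
   Context: A symmetric group is a pair $(G,\sigma)$, $G$ a group, $\sigma(u,v)=({}^uv,u^v)$ an involutive bijection of $G\times G$ with ${}^a1=1,{}^1u=u,1^u=1,a^1=a$, ${}^{ab}u={}^a({}^bu)$, $a^{uv}=(a^u)^v$, ${}^a(uv)=({}^au)({}^{a^u}v)$, $(ab)^u=(a^{{}^bu})(b^u)$, $uv=({}^uv)(u^v)$; it is in particular a non-degenerate symmetric set (non-degenerate involutive set-theoretic solution of the Yang–Baxter equation). For a non-degenerate symmetric set $(X,r)$, $r(x,y)=({}^xy,x^y)$, define $x\sim y$ iff ${}^xz={}^yz$ for all $z\in X$; the retraction $\mathrm{Ret}(X,r)=([X],r_{[X]})$ is the set of classes $[X]=X/\sim$ with $r_{[X]}([x],[y])=([{}^xy],[x^y])$, a non-degenerate symmetric set. It is known (Takeuchi) that $(G/\Gamma, r_{\widetilde G})$ as in the claim is a well-defined symmetric group. *)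

From Stdlib Require Import ClassicalEpsilon.
Set Implicit Arguments.

Definition is_group (G : Type) (mul : G -> G -> G) (one : G) (inv : G -> G) : Prop :=
  (forall a b c, mul (mul a b) c = mul a (mul b c)) /\
  (forall a, mul one a = a) /\ (forall a, mul a one = a) /\
  (forall a, mul (inv a) a = one) /\ (forall a, mul a (inv a) = one).

Definition is_symgroup (G : Type) (mul : G -> G -> G) (one : G) (inv : G -> G)
    (lact ract : G -> G -> G) : Prop :=
  is_group mul one inv /\
  (* sigma is involutive (hence a bijection of G x G) *)
  (forall u v, lact (lact u v) (ract u v) = u /\ ract (lact u v) (ract u v) = v) /\
  (forall a, lact a one = one) /\ (forall u, lact one u = u) /\
  (forall u, ract one u = one) /\ (forall a, ract a one = a) /\
  (forall a b u, lact (mul a b) u = lact a (lact b u)) /\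
  (forall a u v, ract a (mul u v) = ract (ract a u) v) /\
  (forall a u v, lact a (mul u v) = mul (lact a u) (lact (ract a u) v)) /\
  (forall a b u, ract (mul a b) u = mul (ract a (lact b u)) (ract b u)) /\
  (forall u v, mul u v = mul (lact u v) (ract u v)).

Record symdata := SymData {
  carrier :> Type;
  smul : carrier -> carrier -> carrier;
  sone : carrier;
  sinv : carrier -> carrier;
  lact : carrier -> carrier -> carrier;   (* lact a u = ^a u *)
  ract : carrier -> carrier -> carrier }. (* ract a u = a^u  *)

Definition is_symmetric_group (S : symdata) : Prop :=
  is_symgroup (@smul S) (sone S) (@sinv S) (@lact S) (@ract S).

Section Constructions.
Variable S : symdata.

Definition Gamma (a : S) : Prop := forall u : S, lact S a u = u.

Definition coset (a : S) : S -> Prop := fun x => Gamma (smul S (sinv S a) x).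

Definition Tilde : Type := { X : S -> Prop | exists a, X = coset a }.
Definition mkTilde (a : S) : Tilde := exist _ (coset a) (ex_intro _ a eq_refl).
Definition repT (X : Tilde) : S :=
  proj1_sig (constructive_indefinite_description _ (proj2_sig X)).

Definition sim (x y : S) : Prop := forall z, lact S x z = lact S y z.
Definition cls (a : S) : S -> Prop := fun x => sim x a.
Definition Ret : Type := { X : S -> Prop | exists a, X = cls a }.
Definition mkRet (a : S) : Ret := exist _ (cls a) (ex_intro _ a eq_refl).
Definition repR (X : Ret) : S :=
  proj1_sig (constructive_indefinite_description _ (proj2_sig X)).

Definition rTilde (p : Tilde * Tilde) : Tilde * Tilde :=
  (mkTilde (lact S (repT (fst p)) (repT (snd p))),
   mkTilde (ract S (repT (fst p)) (repT (snd p)))).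
Definition mulTilde (X Y : Tilde) : Tilde := mkTilde (smul S (repT X) (repT Y)).

Definition rRet (p : Ret * Ret) : Ret * Ret :=
  (mkRet (lact S (repR (fst p)) (repR (snd p))),
   mkRet (ract S (repR (fst p)) (repR (snd p)))).
Definition lactRet (X Y : Ret) : Ret := fst (rRet (X, Y)).
Definition ractRet (X Y : Ret) : Ret := snd (rRet (X, Y)).
Definition mulRet (X Y : Ret) : Ret := mkRet (smul S (repR X) (repR Y)).
Definition oneRet : Ret := mkRet (sone S).
Definition invRet (X : Ret) : Ret := mkRet (sinv S (repR X)).

Definition phi (X : Tilde) : Ret := mkRet (repT X).

End Constructions.

(* For a in Gamma, the involutivity of sigma applied to the pair (a, v)
   forces ^h a = h a h^-1 and a^h = h^-1 a h.
   Hence Gamma is normal and abelian, and it is also the set of right-trivial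
   elements.  Since ^(ab) = ^a o ^b, two elements x, y induce the same left
   action exactly when x^-1 y is in Gamma, so the retraction classes [x] are
   the cosets x Gamma; the conjugation formulas show that the group law and
   both actions respect cosets, and everything descends to the quotient. *)

From Stdlib Require Import ClassicalEpsilon.
From Stdlib Require Import FunctionalExtensionality PropExtensionality ProofIrrelevance.

Section EquivalenceClasses.
Context {A : Type} (R : A -> A -> Prop).

Definition class_space : Type := { X : A -> Prop | exists a, X = R a }.
Definition class_mk (a : A) : class_space := exist _ (R a) (ex_intro _ a eq_refl).
Definition class_rep (X : class_space) : A :=
  proj1_sig (constructive_indefinite_description _ (proj2_sig X)).

Lemma class_mk_rep (X : class_space) : class_mk (class_rep X) = X.
Proof.
  destruct X as [X HX]. apply subset_eq_compat. unfold class_rep; simpl.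
  destruct (constructive_indefinite_description _ HX) as [a Ha]; simpl.
  symmetry; exact Ha.
Qed.

Hypotheses (R_refl : forall a, R a a) (R_sym : forall a b, R a b -> R b a)
  (R_trans : forall a b c, R a b -> R b c -> R a c).

Lemma class_mk_eq (a b : A) : class_mk a = class_mk b <-> R a b.
Proof.
  split.
  - intro H. apply (f_equal (@proj1_sig _ _)) in H; simpl in H.
    rewrite H. apply R_refl.
  - intro Hab. apply subset_eq_compat.
    apply functional_extensionality; intro x. apply propositional_extensionality.
    split; intro H; eauto.
Qed.

Lemma class_rep_mk (a : A) : R (class_rep (class_mk a)) a.
Proof. apply class_mk_eq. apply class_mk_rep. Qed.

End EquivalenceClasses.

Lemma is_symgroup_surj_image {G Q : Type}
    (mul : G -> G -> G) (one : G) (inv : G -> G) (la ra : G -> G -> G)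
    (mul' : Q -> Q -> Q) (one' : Q) (inv' : Q -> Q) (la' ra' : Q -> Q -> Q)
    (q : G -> Q) :
  (forall y, exists x, q x = y) ->
  (forall a b, q (mul a b) = mul' (q a) (q b)) -> q one = one' ->
  (forall a, q (inv a) = inv' (q a)) ->
  (forall a b, q (la a b) = la' (q a) (q b)) ->
  (forall a b, q (ra a b) = ra' (q a) (q b)) ->
  is_symgroup mul one inv la ra -> is_symgroup mul' one' inv' la' ra'.
Proof.
  intros q_surj qM q1 qV qL qR
    [[mA [m1l [m1r [mVl mVr]]]] [Hinv [L1 [L1u [R1 [Ra1 [LM [RM [LD [RD Mdec]]]]]]]]]].
  subst one'.
  repeat split; intros;
    repeat match goal with x : Q |- _ => destruct (q_surj x) as [? <-]; clear x end;
    repeat first [rewrite <- qM | rewrite <- qV | rewrite <- qL | rewrite <- qR];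
    f_equal; first [apply (proj1 (Hinv _ _)) | apply (proj2 (Hinv _ _)) | auto].
Qed.

Section SymmetricGroupFacts.
Context {S : symdata}.
Hypothesis HS : is_symmetric_group S.

Local Notation "a * b" := (smul S a b) (at level 40, left associativity).
Local Notation "a ⁻¹" := (sinv S a) (at level 2, format "a ⁻¹").
Local Notation e := (sone S).

Lemma mulA a b c : a * b * c = a * (b * c).
Proof. destruct HS as [[H _] _]; apply H. Qed.
Lemma mul1g a : e * a = a.
Proof. destruct HS as [[_ [H _]] _]; apply H. Qed.
Lemma mulg1 a : a * e = a.
Proof. destruct HS as [[_ [_ [H _]]] _]; apply H. Qed.
Lemma mulVg a : a⁻¹ * a = e.
Proof. destruct HS as [[_ [_ [_ [H _]]]] _]; apply H. Qed.
Lemma mulgV a : a * a⁻¹ = e.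
Proof. destruct HS as [[_ [_ [_ [_ H]]]] _]; apply H. Qed.
Lemma sigma_involutive u v :
  lact S (lact S u v) (ract S u v) = u /\ ract S (lact S u v) (ract S u v) = v.
Proof. destruct HS as [_ [H _]]; apply H. Qed.
Lemma lact_by_one u : lact S e u = u.
Proof. destruct HS as [_ [_ [_ [H _]]]]; apply H. Qed.
Lemma ract_by_one a : ract S a e = a.
Proof. destruct HS as [_ [_ [_ [_ [_ [H _]]]]]]; apply H. Qed.
Lemma lact_mul_by a b u : lact S (a * b) u = lact S a (lact S b u).
Proof. destruct HS as [_ [_ [_ [_ [_ [_ [H _]]]]]]]; apply H. Qed.
Lemma ract_mul_by a u v : ract S a (u * v) = ract S (ract S a u) v.
Proof. destruct HS as [_ [_ [_ [_ [_ [_ [_ [H _]]]]]]]]; apply H. Qed.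
Lemma lact_mul a u v : lact S a (u * v) = lact S a u * lact S (ract S a u) v.
Proof. destruct HS as [_ [_ [_ [_ [_ [_ [_ [_ [H _]]]]]]]]]; apply H. Qed.
Lemma ract_mul a b u : ract S (a * b) u = ract S a (lact S b u) * ract S b u.
Proof. destruct HS as [_ [_ [_ [_ [_ [_ [_ [_ [_ [H _]]]]]]]]]]; apply H. Qed.
Lemma mul_sigma u v : u * v = lact S u v * ract S u v.
Proof. destruct HS as [_ [_ [_ [_ [_ [_ [_ [_ [_ [_ H]]]]]]]]]]; apply H. Qed.

Lemma mulKg a b : a⁻¹ * (a * b) = b.
Proof. rewrite <- mulA, mulVg, mul1g. reflexivity. Qed.
Lemma mulKVg a b : a * (a⁻¹ * b) = b.
Proof. rewrite <- mulA, mulgV, mul1g. reflexivity. Qed.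
Lemma invg_unique a b : a * b = e -> b = a⁻¹.
Proof. intro H. rewrite <- (mulKg a b), H, mulg1. reflexivity. Qed.
Lemma invMg a b : (a * b)⁻¹ = b⁻¹ * a⁻¹.
Proof. symmetry. apply invg_unique. rewrite mulA, mulKVg. apply mulgV. Qed.
Lemma invgK a : a⁻¹⁻¹ = a.
Proof. symmetry. apply invg_unique, mulVg. Qed.

Lemma lactK a u : lact S a⁻¹ (lact S a u) = u.
Proof. rewrite <- lact_mul_by, mulVg. apply lact_by_one. Qed.
Lemma lactKV a u : lact S a (lact S a⁻¹ u) = u.
Proof. rewrite <- lact_mul_by, mulgV. apply lact_by_one. Qed.
Lemma ractK a u : ract S (ract S a u) u⁻¹ = a.
Proof. rewrite <- ract_mul_by, mulgV. apply ract_by_one. Qed.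
Lemma ract_def u v : ract S u v = (lact S u v)⁻¹ * (u * v).
Proof. rewrite (mul_sigma u v), mulKg. reflexivity. Qed.
Lemma lact_def u v : lact S u v = u * v * (ract S u v)⁻¹.
Proof. rewrite (mul_sigma u v), mulA, mulgV, mulg1. reflexivity. Qed.

Lemma Gamma1 : Gamma S e.
Proof. intro u. apply lact_by_one. Qed.
Lemma GammaM a b : Gamma S a -> Gamma S b -> Gamma S (a * b).
Proof. intros Ha Hb u. rewrite lact_mul_by, Hb, Ha. reflexivity. Qed.
Lemma GammaV a : Gamma S a -> Gamma S a⁻¹.
Proof. intros Ha u. rewrite <- (Ha u) at 1. apply lactK. Qed.
Lemma Gamma_conjg g a : Gamma S a -> Gamma S (g * a * g⁻¹).
Proof. intros Ha u. rewrite !lact_mul_by, Ha. apply lactKV. Qed.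
Lemma Gamma_conjVg g a : Gamma S a -> Gamma S (g⁻¹ * a * g).
Proof. intro Ha. rewrite <- (invgK g) at 2. apply Gamma_conjg, Ha. Qed.

Lemma ract_Gamma a h : Gamma S a -> ract S a h = h⁻¹ * a * h.
Proof. intro Ha. rewrite ract_def, Ha, mulA. reflexivity. Qed.

(* Involutivity at (a, v) reads ^v (v^-1 a v) = a; take v = h^-1. *)
Lemma lact_Gamma a h : Gamma S a -> lact S h a = h * a * h⁻¹.
Proof.
  intro Ha.
  assert (Hv : lact S h⁻¹ (h * a * h⁻¹) = a).
  { pose proof (proj1 (sigma_involutive a h⁻¹)) as H.
    rewrite (ract_Gamma _ _ Ha), Ha, invgK in H. exact H. }
  rewrite <- Hv at 1. apply lactKV.
Qed.

Lemma ract_by_Gamma a u : Gamma S a -> ract S u a = u.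
Proof.
  intro Ha. rewrite ract_def, (lact_Gamma _ _ Ha), !invMg, invgK, !mulA, mulKg, mulVg.
  apply mulg1.
Qed.

Lemma Gamma_of_ract_by a : (forall u, ract S u a = u) -> Gamma S a.
Proof.
  intro Ha.
  assert (Hl : forall u, lact S u a = ract S a u⁻¹).
  { intro u. pose proof (proj2 (sigma_involutive u a)) as H. rewrite Ha in H.
    rewrite <- H at 2. symmetry. apply ractK. }
  assert (Hr : forall h, ract S a h = h⁻¹ * a * h).
  { intro h. rewrite <- (invgK h) at 1. rewrite <- Hl, lact_def, Ha, invgK. reflexivity. }
  intro u. rewrite lact_def, Hr, !invMg, invgK, !mulA, !mulKVg. reflexivity.
Qed.

Lemma Gamma_comm a b : Gamma S a -> Gamma S b -> a * b = b * a.
Proof.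
  intros Ha Hb. pose proof (ract_Gamma a b Ha) as H.
  rewrite (ract_by_Gamma b a Hb), mulA in H. rewrite H at 2. symmetry. apply mulKVg.
Qed.

Lemma coset_refl x : coset S x x.
Proof. unfold coset. rewrite mulVg. apply Gamma1. Qed.
Lemma coset_sym x y : coset S x y -> coset S y x.
Proof. unfold coset. intro H. apply GammaV in H. rewrite invMg, invgK in H. exact H. Qed.
Lemma coset_trans x y z : coset S x y -> coset S y z -> coset S x z.
Proof.
  unfold coset. intros H1 H2. pose proof (GammaM _ _ H1 H2) as H.
  rewrite mulA, mulKVg in H. exact H.
Qed.

Lemma sim_coset x y : sim S x y <-> coset S x y.
Proof.
  unfold coset, sim. split.
  - intros H u. rewrite lact_mul_by, <- H. apply lactK.
  - intros H z. rewrite <- (mulKVg x y), lact_mul_by, H. reflexivity.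
Qed.

Lemma cosetP x y : coset S x y -> exists c, Gamma S c /\ y = x * c.
Proof. intro H. exists (x⁻¹ * y). split; [exact H | symmetry; apply mulKVg]. Qed.

Lemma coset_mul x y x' y' : coset S x x' -> coset S y y' -> coset S (x * y) (x' * y').
Proof.
  intros Hx Hy. destruct (cosetP _ _ Hx) as [c [Hc ->]]. destruct (cosetP _ _ Hy) as [d [Hd ->]].
  unfold coset. rewrite invMg, !mulA, mulKg, <- !mulA.
  apply GammaM; [apply Gamma_conjVg |]; assumption.
Qed.

Lemma coset_inv x x' : coset S x x' -> coset S x⁻¹ x'⁻¹.
Proof.
  intro Hx. destruct (cosetP _ _ Hx) as [c [Hc ->]].
  unfold coset. rewrite invgK, invMg, <- mulA. apply Gamma_conjg, GammaV, Hc.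
Qed.

Lemma coset_lact x y x' y' :
  coset S x x' -> coset S y y' -> coset S (lact S x y) (lact S x' y').
Proof.
  intros Hx Hy. destruct (cosetP _ _ Hx) as [c [Hc ->]]. destruct (cosetP _ _ Hy) as [d [Hd ->]].
  unfold coset. rewrite lact_mul_by, Hc, lact_mul, (lact_Gamma _ _ Hd), mulKg.
  apply Gamma_conjg, Hd.
Qed.

Lemma coset_ract x y x' y' :
  coset S x x' -> coset S y y' -> coset S (ract S x y) (ract S x' y').
Proof.
  intros Hx Hy. destruct (cosetP _ _ Hx) as [c [Hc ->]]. destruct (cosetP _ _ Hy) as [d [Hd ->]].
  unfold coset. rewrite ract_mul_by, (ract_by_Gamma _ _ Hd), ract_mul, Hc,
    (ract_Gamma _ _ Hc), mulKg.
  apply Gamma_conjVg, Hc.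
Qed.

Lemma mkTilde_eq a b : mkTilde S a = mkTilde S b <-> coset S a b.
Proof. exact (class_mk_eq (coset S) coset_refl coset_sym coset_trans a b). Qed.

Lemma repT_mk a : coset S (repT (mkTilde S a)) a.
Proof. exact (class_rep_mk (coset S) coset_refl coset_sym coset_trans a). Qed.

Lemma mkRet_eq a b : mkRet S a = mkRet S b <-> coset S a b.
Proof.
  change (class_mk (cls S) a = class_mk (cls S) b <-> coset S a b).
  rewrite class_mk_eq; unfold cls.
  - rewrite sim_coset. split; apply coset_sym.
  - intros x z. reflexivity.
  - intros x y H z. symmetry; apply H.
  - intros x y w H1 H2 z. rewrite H2. apply H1.
Qed.

Lemma repR_mk a : coset S (repR (mkRet S a)) a.
Proof. apply mkRet_eq. apply (class_mk_rep (cls S)). Qed.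

Lemma phi_mk a : phi (mkTilde S a) = mkRet S a.
Proof. apply mkRet_eq, repT_mk. Qed.

Lemma mulTilde_mk a b : mulTilde (mkTilde S a) (mkTilde S b) = mkTilde S (a * b).
Proof. apply mkTilde_eq, coset_mul; apply repT_mk. Qed.

Lemma rTilde_mk a b :
  rTilde (mkTilde S a, mkTilde S b) = (mkTilde S (lact S a b), mkTilde S (ract S a b)).
Proof.
  unfold rTilde; simpl. f_equal; apply mkTilde_eq;
    [apply coset_lact | apply coset_ract]; apply repT_mk.
Qed.

Lemma mulRet_mk a b : mulRet (mkRet S a) (mkRet S b) = mkRet S (a * b).
Proof. apply mkRet_eq, coset_mul; apply repR_mk. Qed.
Lemma invRet_mk a : invRet (mkRet S a) = mkRet S a⁻¹.
Proof. apply mkRet_eq, coset_inv, repR_mk. Qed.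
Lemma lactRet_mk a b : lactRet (mkRet S a) (mkRet S b) = mkRet S (lact S a b).
Proof. apply mkRet_eq, coset_lact; apply repR_mk. Qed.
Lemma ractRet_mk a b : ractRet (mkRet S a) (mkRet S b) = mkRet S (ract S a b).
Proof. apply mkRet_eq, coset_ract; apply repR_mk. Qed.

Lemma Tilde_surj (X : Tilde S) : exists a, X = mkTilde S a.
Proof. exists (repT X). symmetry. apply (class_mk_rep (coset S)). Qed.
Lemma Ret_surj (Z : Ret S) : exists a, mkRet S a = Z.
Proof. exists (repR Z). apply (class_mk_rep (cls S)). Qed.

Lemma Ret_is_symgroup :
  is_symgroup (@mulRet S) (oneRet S) (@invRet S) (@lactRet S) (@ractRet S).
Proof.
  apply (is_symgroup_surj_image (smul S) (sone S) (@sinv S) (@lact S) (@ract S)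
           _ _ _ _ _ (mkRet S) Ret_surj);
    try reflexivity; try exact HS; intros; symmetry;
    auto using mulRet_mk, invRet_mk, lactRet_mk, ractRet_mk.
Qed.

End SymmetricGroupFacts.

Theorem mainTheorem4 (S : symdata) (HS : is_symmetric_group S) :
  (forall a : S, Gamma S a <-> (forall u : S, ract S u a = u)) /\
  Gamma S (sone S) /\
  (forall a b : S, Gamma S a -> Gamma S b -> Gamma S (smul S a b)) /\
  (forall a : S, Gamma S a -> Gamma S (sinv S a)) /\
  (forall a b : S, Gamma S a -> Gamma S b -> smul S a b = smul S b a) /\
  (forall g a : S, Gamma S a -> Gamma S (smul S (smul S g a) (sinv S g))) /\
  (forall u a : S, Gamma S a -> Gamma S (lact S u a) /\ Gamma S (ract S a u)) /\
  (forall a : S, phi (mkTilde S a) = mkRet S a) /\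
  (forall X Y : Tilde S, phi X = phi Y -> X = Y) /\
  (forall Z : Ret S, exists X : Tilde S, phi X = Z) /\
  (forall X Y : Tilde S,
     (phi (fst (rTilde (X, Y))), phi (snd (rTilde (X, Y)))) = rRet (phi X, phi Y)) /\
  is_symgroup (@mulRet S) (oneRet S) (@invRet S) (@lactRet S) (@ractRet S) /\
  (forall X Y : Tilde S, phi (mulTilde X Y) = mulRet (phi X) (phi Y)).
Proof.
  split. { split; [intros Ha u; apply (ract_by_Gamma HS), Ha | apply (Gamma_of_ract_by HS)]. }
  split. { exact (Gamma1 HS). }
  split. { exact (GammaM HS). }
  split. { exact (GammaV HS). }
  split. { exact (Gamma_comm HS). }
  split. { exact (Gamma_conjg HS). }
  split. { intros u a Ha. rewrite (lact_Gamma HS _ _ Ha), (ract_Gamma HS _ _ Ha).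
    split; [apply (Gamma_conjg HS) | apply (Gamma_conjVg HS)]; exact Ha. }
  split. { exact (phi_mk HS). }
  split. { intros X Y. destruct (Tilde_surj X) as [x ->], (Tilde_surj Y) as [y ->].
    rewrite !(phi_mk HS), (mkRet_eq HS), (mkTilde_eq HS). trivial. }
  split. { intro Z. destruct (Ret_surj Z) as [z <-]. exists (mkTilde S z). apply (phi_mk HS). }
  split. { intros X Y. destruct (Tilde_surj X) as [x ->], (Tilde_surj Y) as [y ->].
    rewrite (rTilde_mk HS); simpl. rewrite !(phi_mk HS).
    change (rRet (mkRet S x, mkRet S y))
      with (lactRet (mkRet S x) (mkRet S y), ractRet (mkRet S x) (mkRet S y)).
    rewrite (lactRet_mk HS), (ractRet_mk HS). reflexivity. }
  split. { exact (Ret_is_symgroup HS). }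
  intros X Y. destruct (Tilde_surj X) as [x ->], (Tilde_surj Y) as [y ->].
  rewrite (mulTilde_mk HS), !(phi_mk HS), (mulRet_mk HS). reflexivity.
Qed.
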